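(* Let $m\ge 2$, let $K/F$ be a cyclic Galois field extension of degree $m$ with $\mathrm{Gal}(K/F)=\langle\sigma\rangle$, and suppose $F$ contains a primitive $m$th root of unity $\omega$. Let $d\in K\setminus F$ and suppose that the nonassociative cyclic algebra $A=(K/F,\sigma,d)$ is a division algebra. Then $A$ is a nonassociative cyclic extension of $K$ of degree $m$, and the corresponding cyclic subgroup of order $m$ of $\mathrm{Aut}_F(A)$ is generated by the automorphism $H_{\mathrm{id},\omega}$.
   Context: For a field $K$ and $\sigma\in\mathrm{Aut}(K)$, the twisted polynomial ring $K[t;\sigma]$ consists of polynomials $\sum a_it^i$ ($a_i\in K$) with termwise addition and multiplication determined by $ta=\sigma(a)t$. For $f=t^m-d\in K[t;\sigma]$, $d\in K^\times$, every $g$ can be uniquely written $g=qf+r$ with $\deg r<m$ (right division); the nonassociative cyclic algebra $(K/F,\sigma,d)$ is the $F$-vector space of polynomials of degree $<m$ with multiplication $g\circ h=$ remainder of $gh$ on right division by $f$; it is a unital (generally nonassociative) algebra over $F$ containing $K$. For $k\in K$ with $N_{K/F}(k)=1$, $H_{\mathrm{id},k}(\sum_{i=0}^{m-1}a_it^i)=a_0+\sum_{i=1}^{m-1}a_i\big(\prod_{l=0}^{i-1}\sigma^l(k)\big)t^i$. An algebra $A\ne0$ is a division algebra if left and right multiplication by every nonzero element are bijective. Definition: if $A$ is a nonassociative division algebra and $D\subseteq A$ an associative division subalgebra, $A$ is a nonassociative cyclic extension of $D$ of degree $m$ if $A$ is a free left $D$-module of rank $m$ and $\mathrm{Aut}(A)$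 has a cyclic subgroup $G$ of order $m$ such that $H|_D=\mathrm{id}_D$ for all $H\in G$. *)

From HB Require Import structures.
From mathcomp Require Import all_boot all_order all_algebra all_fingroup all_field.
Set Implicit Arguments. Unset Strict Implicit. Unset Printing Implicit Defensive.
Import GRing.Theory.
Local Open Scope ring_scope.

Section NonassocAlgebra.
Variables (F : fieldType) (T : zmodType) (scal : F -> T -> T)
  (mul : T -> T -> T) (one : T).

Definition is_division_algebra : Prop :=
  (exists x : T, x != 0) /\
  forall a : T, a != 0 -> bijective (mul a) /\ bijective (fun y => mul y a).

Definition is_assoc_division_subalgebra (D : T -> Prop) : Prop :=
  [/\ D 0, D one,
      (forall x y, D x -> D y -> D (x + y) /\ D (mul x y)) &
      (forall c x, D x -> D (scal c x))] /\
  [/\ (forall x y z, D x -> D y -> D z -> mul (mul x y) z = mul x (mul y z)),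
      (exists x, D x /\ x != 0) &
      (forall a, D a -> a != 0 -> exists2 b, D b & mul a b = one /\ mul b a = one)].

Definition is_free_left_module (D : T -> Prop) (m : nat) : Prop :=
  exists b : 'I_m -> T, forall x : T,
    exists! c : {ffun 'I_m -> T},
      (forall i, D (c i)) /\ x = \sum_(i < m) mul (c i) (b i).

Definition is_algebra_aut (H : T -> T) : Prop :=
  [/\ bijective H,
      (forall x y, H (x + y) = H x + H y),
      (forall c x, H (scal c x) = scal c (H x)) &
      (forall x y, H (mul x y) = mul (H x) (H y))].

Definition cyclic_gen (g : T -> T) : (T -> T) -> Prop :=
  fun H => exists k : nat, H =1 iter k g.

Definition is_cyclic_aut_subgroup (G : (T -> T) -> Prop) (m : nat) : Prop :=
  exists g : T -> T,
    [/\ is_algebra_aut g,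
        (forall H, G H <-> cyclic_gen g H),
        iter m g =1 id &
        (forall k, (0 < k < m)%N -> ~ (iter k g =1 id))].

Definition nonassoc_cyclic_ext_with (D : T -> Prop) (m : nat)
    (G : (T -> T) -> Prop) : Prop :=
  [/\ is_division_algebra,
      is_assoc_division_subalgebra D,
      is_free_left_module D m,
      is_cyclic_aut_subgroup G m &
      (forall H, G H -> forall x, D x -> H x = x)].

Definition nonassoc_cyclic_ext (D : T -> Prop) (m : nat) : Prop :=
  exists G, nonassoc_cyclic_ext_with D m G.

End NonassocAlgebra.

(* K is L (a field extension of F), an element sum_{i<m} a_i t^i is    *)
(* stored as its coefficient function a : 'I_m -> L.                   *)
Section CyclicAlgebra.
Variables (F : fieldType) (L : splittingFieldType F) (m : nat)
  (sigma : gal_of {:L}) (d : L).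

Definition cyc_alg := {ffun 'I_m -> L}.

Definition sig (i : nat) (x : L) : L := (sigma ^+ i)%g x.

(* Product g o h = remainder of g h on right division by t^m - d in
   K[t;sigma].  Using t a = sigma(a) t one gets
   (a t^i)(b t^j) = a sigma^i(b) t^(i+j), and the remainder of
   a t^(m+k) (k < m) on right division by t^m - d is a sigma^k(d) t^k,
   since t^(m+k) = t^k (t^m - d) + sigma^k(d) t^k. *)
Definition cyc_mul (x y : cyc_alg) : cyc_alg :=
  [ffun k : 'I_m => \sum_(i < m) \sum_(j < m)
      (if (i + j == k)%N then x i * sig i (y j)
       else if (i + j == k + m)%N then x i * sig i (y j) * sig k d
       else 0)].

Definition cyc_const (a : L) : cyc_alg :=
  [ffun i : 'I_m => if (val i == 0)%N then a else 0].

Definition cyc_one : cyc_alg := cyc_const 1.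

Definition cyc_scal (c : F) (x : cyc_alg) : cyc_alg :=
  [ffun i => c%:A * x i].

Definition cyc_K (x : cyc_alg) : Prop := exists a : L, x = cyc_const a.

Definition H_id (k : L) (x : cyc_alg) : cyc_alg :=
  [ffun i : 'I_m => x i * \prod_(l < val i) sig l k].

End CyclicAlgebra.

(* The automorphism H_{id,omega} multiplies the coefficient of t^i by omega^i.
   Since omega lies in F it is fixed by sigma, so t^i a = sigma^i(a) t^i is
   respected, and the twist t^(m+k) = sigma^k(d) t^k is respected because
   omega^m = 1; hence H_{id,omega} is an automorphism fixing K, and its k-th
   iterate multiplies t by omega^k, so it has order exactly m. *)

From HB Require Import structures.
From mathcomp Require Import all_boot all_order all_algebra all_fingroup all_field.
From mathcomp Require Import ring.
Import GRing.Theory.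
Local Open Scope ring_scope.

Section CyclicAlgebraTheory.
Variables (F : fieldType) (L : splittingFieldType F) (sigma : gal_of {:L}).

Lemma sig0 (x : L) : sig sigma 0 x = x.
Proof. by rewrite /sig expg0 gal_id. Qed.

Lemma sigM l (a b : L) : sig sigma l (a * b) = sig sigma l a * sig sigma l b.
Proof. by rewrite /sig rmorphM. Qed.

Lemma sig_alg l (c : F) : sig sigma l c%:A = c%:A.
Proof. by rewrite /sig linearZ /= rmorph1. Qed.

Lemma sig_algX l (c : F) j : sig sigma l (c%:A ^+ j) = c%:A ^+ j.
Proof. by rewrite /sig rmorphXn /= linearZ /= rmorph1. Qed.

Section Automorphism.
Variables (m : nat) (d : L) (w : F).
Local Notation h := (@H_id F L m sigma w%:A).

Lemma H_id_algE (x : cyc_alg L m) : h x = [ffun i => x i * w%:A ^+ i].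
Proof.
apply/ffunP => i; rewrite !ffunE; congr (_ * _).
by rewrite (eq_bigr (fun _ => w%:A)) ?prodr_const ?card_ord // => l _; rewrite sig_alg.
Qed.

Lemma iter_H_id_alg k (x : cyc_alg L m) :
  iter k h x = [ffun i => x i * (w%:A ^+ i) ^+ k].
Proof.
elim: k => [|k IHk]; first by apply/ffunP => i; rewrite ffunE expr0 mulr1.
by apply/ffunP => i; rewrite iterS IHk H_id_algE !ffunE exprS; ring.
Qed.

Lemma iter_H_id_alg_const k (a : L) :
  iter k h (cyc_const m a) = cyc_const m a.
Proof.
apply/ffunP => i; rewrite iter_H_id_alg !ffunE.
by case: ifP => [/eqP -> | _]; rewrite ?expr0 ?expr1n ?mulr1 ?mul0r.
Qed.

Hypothesis w_order : (w%:A : L) ^+ m = 1.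

Lemma H_id_alg_mul (x y : cyc_alg L m) :
  h (cyc_mul sigma d x y) = cyc_mul sigma d (h x) (h y).
Proof.
rewrite !H_id_algE; apply/ffunP => k; rewrite !ffunE mulr_suml.
apply: eq_bigr => i _; rewrite mulr_suml; apply: eq_bigr => j _.
rewrite !ffunE sigM sig_algX.
case: ifP => [/eqP <- | _]; first by rewrite exprD; ring.
case: ifP => [/eqP ijk | _]; last by rewrite mul0r.
have -> : (w%:A : L) ^+ k = w%:A ^+ i * w%:A ^+ j.
  by rewrite -exprD ijk exprD w_order mulr1.
ring.
Qed.

Lemma iter_H_id_alg_order : iter m h =1 id.
Proof.
move=> x; apply/ffunP => i; rewrite iter_H_id_alg ffunE.
by rewrite exprAC w_order expr1n mulr1.
Qed.

Lemma H_id_alg_is_algebra_aut :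
  is_algebra_aut (@cyc_scal F L m) (cyc_mul sigma d) h.
Proof.
split.
- exists (iter m.-1 h) => x; have [m0 | m_gt0] := posnP m.
  + by apply/ffunP => i; suff : (i < 0)%N by []; rewrite -m0.
  + by rewrite -iterSr prednK // iter_H_id_alg_order.
  + by apply/ffunP => i; suff : (i < 0)%N by []; rewrite -m0.
  + by rewrite -iterS prednK // iter_H_id_alg_order.
- by move=> x y; rewrite !H_id_algE; apply/ffunP => i; rewrite !ffunE mulrDl.
- by move=> c x; rewrite !H_id_algE; apply/ffunP => i; rewrite !ffunE mulrA.
- exact: H_id_alg_mul.
Qed.

End Automorphism.

Definition cyc_tpow {m} (j : 'I_m) : cyc_alg L m := [ffun k => (k == j)%:R].

Lemma H_id_alg_cyclic_aut_subgroup m d (w : F) :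
  m.-primitive_root w ->
  is_cyclic_aut_subgroup (@cyc_scal F L m) (cyc_mul sigma d)
    (cyclic_gen (@H_id F L m sigma w%:A)) m.
Proof.
move=> w_prim; have w_order : (w%:A : L) ^+ m = 1.
  by rewrite -in_algE -rmorphXn prim_expr_order // rmorph1.
exists (H_id sigma w%:A); split => //.
- exact: H_id_alg_is_algebra_aut.
- exact: iter_H_id_alg_order.
move=> k /andP [k_gt0 k_lt_m] iter_id.
have m_gt1 : (1 < m)%N by apply: leq_ltn_trans k_lt_m.
have /ffunP/(_ (Ordinal m_gt1)) := iter_id (cyc_tpow (Ordinal m_gt1)).
rewrite iter_H_id_alg !ffunE eqxx mul1r expr1 -in_algE -rmorphXn => /eqP.
rewrite fmorph_eq1 -(prim_order_dvd w_prim) => /(dvdn_leq k_gt0).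
by rewrite leqNgt k_lt_m.
Qed.

Section ScalarSubfield.
Variables (n : nat) (d : L).
Local Notation m := n.+1.
Local Notation cst := (@cyc_const F L m).
Local Notation mul := (cyc_mul sigma d).

Lemma cyc_mul_constl a (y : cyc_alg L m) : mul (cst a) y = [ffun k => a * y k].
Proof.
apply/ffunP => k; rewrite !ffunE big_ord_recl /=.
rewrite [X in _ + X]big1 ?addr0; last first.
  move=> i _; apply: big1 => j _; rewrite ffunE /=.
  by case: ifP => _; rewrite ?mul0r //; case: ifP; rewrite ?mul0r.
rewrite ffunE /= (bigD1 k) //= add0n eqxx sig0 big1 ?addr0 // => j /negbTE jk.
rewrite add0n; move: jk; rewrite -(inj_eq val_inj) /= => -> /=.
suff /negbTE -> : (val j != k + m)%N by [].
by rewrite neq_ltn (leq_trans (ltn_ord j)) ?leq_addl.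
Qed.

Lemma cyc_mul_const a b : mul (cst a) (cst b) = cst (a * b).
Proof.
by rewrite cyc_mul_constl; apply/ffunP => k; rewrite !ffunE; case: ifP; rewrite ?mulr0.
Qed.

Lemma cyc_constD a b : cst a + cst b = cst (a + b).
Proof. by apply/ffunP => k; rewrite !ffunE; case: ifP; rewrite ?addr0. Qed.

Lemma cyc_scal_const (c : F) a : cyc_scal c (cst a) = cst (c%:A * a).
Proof. by apply/ffunP => k; rewrite !ffunE; case: ifP; rewrite ?mulr0. Qed.

Lemma cyc_const_eq0 a : (cst a == 0) = (a == 0).
Proof.
apply/eqP/eqP => [/ffunP/(_ ord0) | ->]; first by rewrite !ffunE.
by apply/ffunP => k; rewrite !ffunE; case: ifP.
Qed.

Lemma cyc_KE x : cyc_K x -> x = cst (x ord0).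
Proof. by case=> a ->; rewrite ffunE. Qed.

Lemma cyc_K_assoc_division_subalgebra :
  is_assoc_division_subalgebra (@cyc_scal F L m) mul (cyc_one L m) (@cyc_K F L m).
Proof.
split; split.
- by exists 0; apply/eqP; rewrite eq_sym cyc_const_eq0.
- by exists 1.
- by move=> _ _ [a ->] [b ->]; rewrite cyc_constD cyc_mul_const; split; eexists.
- by move=> c _ [a ->]; rewrite cyc_scal_const; eexists.
- by move=> _ _ _ [a ->] [b ->] [c ->]; rewrite !cyc_mul_const mulrA.
- by exists (cyc_one L m); split; [exists 1 | rewrite cyc_const_eq0 oner_eq0].
- move=> _ [a ->]; rewrite cyc_const_eq0 => a_neq0.
  exists (cst a^-1); first by exists a^-1.
  by rewrite !cyc_mul_const mulfV // mulVf.
Qed.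

Lemma cyc_sum_const_tpow (a : 'I_m -> L) :
  \sum_(i < m) mul (cst (a i)) (cyc_tpow i) = [ffun k => a k].
Proof.
apply/ffunP => k; rewrite sum_ffunE ffunE.
under eq_bigr => i _ do rewrite cyc_mul_constl ffunE ffunE.
rewrite (bigD1 k) //= eqxx mulr1 big1 ?addr0 // => i /negbTE.
by rewrite eq_sym => ->; rewrite mulr0.
Qed.

Lemma cyc_K_free_left_module : is_free_left_module mul (@cyc_K F L m) m.
Proof.
exists cyc_tpow => x; exists [ffun i => cst (x i)]; split.
  split=> [i | ]; first by rewrite ffunE; eexists.
  under eq_bigr => i _ do rewrite ffunE.
  by rewrite cyc_sum_const_tpow; apply/ffunP => k; rewrite ffunE.
move=> c [c_K ->]; under eq_bigr => i _ do rewrite (cyc_KE _ (c_K i)).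
by apply/ffunP => i; rewrite cyc_sum_const_tpow !ffunE -cyc_KE.
Qed.

End ScalarSubfield.

End CyclicAlgebraTheory.

Theorem theorem2p3 (F : fieldType) (L : splittingFieldType F) (m : nat)
    (sigma : gal_of {:L}) (omega : F) (d : L) :
  (2 <= m)%N ->
  galois 1%VS {:L} ->
  \dim {:L} = m ->
  ('Gal({:L} / 1%VS))%g = <[sigma]>%g ->
  m.-primitive_root omega ->
  d \notin 1%VS ->
  is_division_algebra (@cyc_mul F L m sigma d) ->
  nonassoc_cyclic_ext (@cyc_scal F L m) (@cyc_mul F L m sigma d)
    (@cyc_one F L m) (@cyc_K F L m) m /\
  nonassoc_cyclic_ext_with (@cyc_scal F L m) (@cyc_mul F L m sigma d)
    (@cyc_one F L m) (@cyc_K F L m) m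
    (cyclic_gen (@H_id F L m sigma (omega%:A))).
Proof.
case: m => [// | n] _ _ _ _ omega_prim _ A_div.
suff A_ext : nonassoc_cyclic_ext_with (@cyc_scal F L n.+1) (cyc_mul sigma d)
    (cyc_one L n.+1) (@cyc_K F L n.+1) n.+1 (cyclic_gen (H_id sigma omega%:A)).
  by split; first exists (cyclic_gen (H_id sigma omega%:A)).
split => //.
- exact: cyc_K_assoc_division_subalgebra.
- exact: cyc_K_free_left_module.
- exact: H_id_alg_cyclic_aut_subgroup.
- by move=> H [k H_iter] _ [a ->]; rewrite H_iter iter_H_id_alg_const.
Qed.
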